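(* Let $L_{kal}$ be the steady-state Kalman filter gain. Then, for every selection matrix $D_a$ and every symmetric positive semidefinite $W$, $L_{kal}$ is an optimal solution of $$\max_{L\in\mathbb{R}^{n_x\times n_y},\ \lambda\in\mathbb{R}_+}\ \lambda\quad\text{s.t.}\quad \tfrac12 D_a^\top\Sigma_{r_\omega}^{-1}(L)D_a-\lambda D_a^\top W D_a\succeq0,\quad \rho(A-LC)<1,$$ i.e., $J_0(L_{kal})\ge J_0(L)$ for every $L$ with $\rho(A-LC)<1$.
   Context: Consider the discrete-time system $x(k+1)=Ax(k)+Bu(k)+B_\omega\omega(k)$, $y(k)=Cx(k)+D_\omega\omega(k)+y_a(k)$, with $x\in\mathbb{R}^{n_x}$, $y\in\mathbb{R}^{n_y}$, $\omega(k)\sim\mathcal N(0,I_{n_\omega})$ i.i.d., $(A,C)$ detectable, $(A,B_\omega)$ stabilizable, and an observer $\hat x(k+1)=A\hat x(k)+Bu(k)+L(y(k)-C\hat x(k))$ with residual $r(k)=y(k)-C\hat x(k)$. The attack is $y_a(k)=D_a\bar a$ for $k\ge0$ (zero before), where $D_a\in\mathbb{R}^{n_y\times n_a}$ has entries $(j_i,i)=1$ for the compromised sensor indices $j_1<\dots<j_{n_a}$ and zeros elsewhere; $W\in\mathbb{R}^{n_y\times n_y}$ is symmetric positive semidefinite. For $L$ with $\rho(A-LC)<1$ ($\rho$ = spectral radius), $\Sigma_{\tilde x}(L)$ solves $\Sigma=(A-LC)\Sigma(A-LC)^\top+(B_\omega-LD_\omega)(B_\omega-LD_\omega)^\top$ and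 $\Sigma_{r_\omega}(L)=C\Sigma_{\tilde x}(L)C^\top+D_\omega D_\omega^\top$ (assumed invertible). The steady-state Kalman filter gain $L_{kal}$ (predictor form matching the observer above) is stabilizing and minimizes the residual covariance: $\Sigma_{r_\omega}(L_{kal})\preceq\Sigma_{r_\omega}(L)$ for all $L$ with $\rho(A-LC)<1$. Define $J_0(L)=\min_{\bar a\in\mathbb{R}^{n_a}}\frac12\bar a^\top D_a^\top\Sigma_{r_\omega}^{-1}(L)D_a\bar a$ subject to $\bar a^\top D_a^\top WD_a\bar a\ge1$. $\mathbb{R}_+$ denotes the positive reals. *)

From HB Require Import structures.
From mathcomp Require Import all_boot all_order all_algebra.
From mathcomp Require Import complex.
From mathcomp Require Import all_classical all_reals ereal.
Set Implicit Arguments. Unset Strict Implicit. Unset Printing Implicit Defensive.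
Import Order.TTheory GRing.Theory Num.Theory.
Local Open Scope ring_scope.
Local Open Scope classical_set_scope.

Section Defs.
Variable R : realType.

Definition cmx n (M : 'M[R]_n) : 'M[R[i]]_n := map_mx (fun x => (x%:C)%C) M.

(* spectral radius < 1 : every (complex) eigenvalue has modulus < 1 *)
Definition schur_stable n (M : 'M[R]_n) : Prop :=
  forall z : R[i], eigenvalue (cmx M) z -> `|z| < 1.

Definition symmetric n (M : 'M[R]_n) : Prop := M^T = M.
Definition psd n (M : 'M[R]_n) : Prop :=
  symmetric M /\ forall v : 'cV[R]_n, 0 <= (v^T *m M *m v) 0 0.
Definition loewner_le n (M N : 'M[R]_n) : Prop := psd (N - M).

(* Sigma solves the Lyapunov equation defining Sigma_x~(L) *)
Definition lyap_sol nx ny nw (A : 'M[R]_nx) (Bw : 'M[R]_(nx, nw))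
  (C : 'M[R]_(ny, nx)) (Dw : 'M[R]_(ny, nw)) (L : 'M[R]_(nx, ny))
  (S : 'M[R]_nx) : Prop :=
  S = (A - L *m C) *m S *m (A - L *m C)^T
      + (Bw - L *m Dw) *m (Bw - L *m Dw)^T.

Definition Sigma_r nx ny nw (C : 'M[R]_(ny, nx)) (Dw : 'M[R]_(ny, nw))
  (S : 'M[R]_nx) : 'M[R]_ny := C *m S *m C^T + Dw *m Dw^T.

Definition sel_mx ny na (j : 'I_na -> 'I_ny) : 'M[R]_(ny, na) :=
  \matrix_(r < ny, i < na) (r == j i)%:R.

Definition strictly_increasing ny na (j : 'I_na -> 'I_ny) : Prop :=
  forall i i' : 'I_na, (i < i')%N -> (j i < j i')%N.

Definition qf n (M : 'M[R]_n) (a : 'cV[R]_n) : R := (a^T *m M *m a) 0 0.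

(* J0 = min over abar with abar^T Da^T W Da abar >= 1 of 1/2 abar^T Da^T Sr^-1 Da abar,
   written as an infimum in the extended reals (+oo when infeasible) *)
Definition J0 ny na (Da : 'M[R]_(ny, na)) (W Sr : 'M[R]_ny) : \bar R :=
  ereal_inf [set ((2^-1 * qf (Da^T *m invmx Sr *m Da) a)%:E)
            | a in [set a : 'cV[R]_na | 1 <= qf (Da^T *m W *m Da) a]].

(* feasibility of (L, lambda) in the max problem, given Sigma_r(L) = Sr *)
Definition lam_feasible ny na (Da : 'M[R]_(ny, na)) (W Sr : 'M[R]_ny) (lam : R) : Prop :=
  0 < lam /\ psd (2^-1 *: (Da^T *m invmx Sr *m Da) - lam *: (Da^T *m W *m Da)).

End Defs.
Arguments sel_mx {R ny na} j.

(* The residual covariance of a stabilizing gain is positive semidefinite: the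
   solution of [S = M S M^T + B B^T] with [M] Schur stable dominates
   [M^k S (M^k)^T], whose entries decay geometrically (Cayley-Hamilton over
   [R[i]]).  On invertible positive semidefinite matrices inversion reverses the
   Loewner order and congruence by [D_a] preserves it, so the Loewner-minimal
   Kalman covariance gives [D_a^T Sigma_r(L)^-1 D_a <= D_a^T Sigma_r(Lkal)^-1 D_a].
   Hence every lambda feasible for [L] stays feasible for [Lkal], and the
   objective defining [J_0] is pointwise larger at [Lkal]. *)

From HB Require Import structures.
From mathcomp Require Import all_boot all_order all_algebra.
From mathcomp Require Import complex.
From mathcomp Require Import all_classical all_reals ereal topology normedtype sequences.
From mathcomp Require Import ring lra.
Import Order.TTheory GRing.Theory Num.Theory.
Set Implicit Arguments. Unset Strict Implicit. Unset Printing Implicit Defensive.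
Local Open Scope ring_scope.

Section GeometricBound.
Variable F : numFieldType.

Definition geo_bounded (r : F) (a : nat -> F) :=
  exists c, forall k, `|a k| <= c * r ^+ k.

Lemma geo_bounded_recurrence (l r : F) (a b : nat -> F) : `|l| < r ->
  (forall k, a k.+1 = l * a k + b k) -> geo_bounded r b -> geo_bounded r a.
Proof.
move=> lr ab [c Hb].
have r0 : 0 <= r by rewrite ltW // (le_lt_trans (normr_ge0 l)).
have dr : 0 < r - `|l| by rewrite subr_gt0.
have c0 : 0 <= c by have := Hb 0%N; rewrite expr0 mulr1; apply: le_trans.
pose c' : F := `|a 0%N| + c / (r - `|l|); exists c'.
have step : `|l| * c' + c <= c' * r.
  rewrite -subr_ge0 (_ : _ - _ = `|a 0%N| * (r - `|l|)).
    by rewrite mulr_ge0 // ltW.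
  by rewrite /c'; field; rewrite gt_eqF.
elim=> [|k IH]; first by rewrite expr0 mulr1 lerDl divr_ge0 // ltW.
rewrite ab; apply: (le_trans (ler_normD _ _)); rewrite normrM.
apply: le_trans (lerD (ler_wpM2l (normr_ge0 l) IH) (Hb k)) _.
by rewrite mulrA -mulrDl exprS mulrA ler_wpM2r ?exprn_ge0.
Qed.

Lemma geo_bounded_mx n (M : 'M[F]_n) (s : seq F) (r : F) (u : 'rV_n) i :
  (forall l, l \in s -> `|l| < r) -> u *m \prod_(l <- s) (M - l%:M) = 0 ->
  geo_bounded r (fun k => (u *m M ^+ k) 0 i).
Proof.
elim: s u => [|l s IH] u Hs Hu.
  exists 0 => k; move: Hu; rewrite big_nil mulmx1 => ->.
  by rewrite mul0mx mxE normr0 mul0r.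
apply: (@geo_bounded_recurrence l _ _ (fun k => (u *m (M - l%:M) *m M ^+ k) 0 i)).
- by apply: Hs; rewrite mem_head.
- move=> k; have -> : u *m M ^+ k.+1 = l *: (u *m M ^+ k) + u *m (M - l%:M) *m M ^+ k.
    by rewrite exprS -mulmxE mulmxA mulmxBr mulmxBl mul_mx_scalar -scalemxAl addrC subrK.
  by rewrite 2!mxE.
apply: IH; last by move: Hu; rewrite big_cons -mulmxE mulmxA.
by move=> l' ls; apply: Hs; rewrite inE ls orbT.
Qed.

End GeometricBound.

Lemma lt1_bound_seq (K : realFieldType) (s : seq K) : (forall x, x \in s -> x < 1) ->
  exists2 r : K, 0 <= r < 1 & forall x, x \in s -> x < r.
Proof.
elim: s => [|x s IH] Hs; first by exists 0; rewrite ?lexx ?ltr01.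
have [r /andP[r0 r1] Hr] : exists2 r : K, 0 <= r < 1 & forall y, y \in s -> y < r.
  by apply: IH => y ys; apply: Hs; rewrite inE ys orbT.
have x1 := Hs x (mem_head x s).
exists (Num.max r ((x + 1) / 2)); first by rewrite le_max r0 gt_max r1 /=; lra.
move=> y; rewrite inE lt_max => /orP[/eqP-> | /Hr->//]; apply/orP; right; lra.
Qed.

Section SpectralDecay.
Variable R : realType.
Local Open Scope complex_scope.

Lemma normr_real_complex (x : R) : `|x%:C| = `|x|%:C.
Proof. by rewrite normc_def /= expr0n /= addr0 sqrtr_sqr. Qed.

Lemma complex_ge0_real (c : R[i]) : 0 <= c -> c = (complex.Re c)%:C.
Proof. by move=> /ger0_Im Hc; rewrite {1}[c]complexE Hc mulr0 addr0. Qed.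

Lemma geo_bounded_real_complex (r : R) (a : nat -> R) :
  geo_bounded r%:C (fun k => (a k)%:C) -> geo_bounded r a.
Proof.
move=> [c Hc].
have c0 : 0 <= c by have := Hc 0%N; rewrite expr0 mulr1; apply: le_trans.
exists (complex.Re c) => k; have := Hc k.
by rewrite normr_real_complex {1}(complex_ge0_real c0) -rmorphXn -rmorphM lecR.
Qed.

Lemma cmxX n (M : 'M[R]_n) k : cmx M ^+ k = cmx (M ^+ k).
Proof.
rewrite /cmx (_ : (fun x => x%:C) = real_complex R) //.
elim: k => [|k IH]; first by rewrite !expr0 map_mx1.
by rewrite !exprS IH -!mulmxE map_mxM.
Qed.

Lemma schur_stable_geo_bounded n (M : 'M[R]_n) : schur_stable M ->
  exists2 r : R, 0 <= r < 1 &
    forall (u : 'rV_n) i, geo_bounded r (fun k => (u *m M ^+ k) 0 i).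
Proof.
case: n M => [|n] M HM; first by exists 0; rewrite ?lexx ?ltr01 // => u [].
have [s Hs] := closed_field_poly_normal (char_poly (cmx M)).
rewrite (monicP (char_poly_monic _)) scale1r in Hs.
have normr_eig l : `|l| = (complex.Re `|l|)%:C := complex_ge0_real (normr_ge0 l).
have [r r01 Hr] : exists2 r : R, 0 <= r < 1 &
    forall x, x \in map (fun l => complex.Re `|l|) s -> x < r.
  apply: lt1_bound_seq => _ /mapP[l ls ->]; rewrite -ltcR -normr_eig; apply: HM.
  by rewrite eigenvalue_root_char Hs root_prod_XsubC.
exists r => // u i; apply: geo_bounded_real_complex.
have -> : (fun k => ((u *m M ^+ k) 0 i)%:C) =
          (fun k => (map_mx (real_complex R) u *m cmx M ^+ k) 0 i).
  apply: funext => k; rewrite cmxX /cmx (_ : (fun x => x%:C) = real_complex R) //.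
  by rewrite -map_mxM [RHS]mxE.
apply: (geo_bounded_mx (s := s)).
  by move=> l ls; rewrite normr_eig ltcR Hr //; apply: map_f.
have -> : \prod_(l <- s) (cmx M - l%:M) = 0.
  rewrite -(Cayley_Hamilton (cmx M)) Hs rmorph_prod; apply: eq_bigr => l _.
  by rewrite rmorphB /= horner_mx_X horner_mx_C.
by rewrite mulmx0.
Qed.

Lemma geo_bounded_small (r : R) (a : nat -> R) : 0 <= r < 1 -> geo_bounded r a ->
  forall eps : R, 0 < eps -> exists k, `|a k| < eps.
Proof.
move=> /andP[r0 r1] [c Hc] eps e0.
have r1' : `|r| < 1 by rewrite ger0_norm.
have [N _ HN] :=
  @cvgr0_norm_lt _ R^o _ _ _ (geometric c r) (cvg_geometric c r1') eps e0.
by exists N; apply: le_lt_trans (Hc N) (le_lt_trans (ler_norm _) (HN N (leqnn N))).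
Qed.

End SpectralDecay.

Section RowForm.
Variable R : realType.

(* Row vectors, so that [S = M S M^T + B B^T] transports [x] to [x M]. *)
Definition rform n (Y : 'M[R]_n) (x y : 'rV[R]_n) : R := (x *m Y *m y^T) 0 0.

Lemma rform_tr n (X : 'M[R]_n) v : (v^T *m X *m v) 0 0 = rform X v^T v^T.
Proof. by rewrite /rform trmxK. Qed.

Lemma rformD n (Y Z : 'M[R]_n) x y : rform (Y + Z) x y = rform Y x y + rform Z x y.
Proof. by rewrite /rform mulmxDr mulmxDl mxE. Qed.

Lemma rformB n (Y Z : 'M[R]_n) x y : rform (Y - Z) x y = rform Y x y - rform Z x y.
Proof. by rewrite /rform mulmxBr mulmxBl [LHS]mxE [X in _ + X]mxE. Qed.

Lemma rformBl n (Y : 'M[R]_n) x x' y : rform Y (x - x') y = rform Y x y - rform Y x' y.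
Proof. by rewrite /rform !mulmxBl !mxE. Qed.

Lemma rformBr n (Y : 'M[R]_n) x y y' : rform Y x (y - y') = rform Y x y - rform Y x y'.
Proof. by rewrite /rform linearB /= mulmxBr !mxE. Qed.

Lemma rform_sym n (Y : 'M[R]_n) x y : Y^T = Y -> rform Y x y = rform Y y x.
Proof.
move=> sY; rewrite /rform.
have -> : (x *m Y *m y^T) 0 0 = (x *m Y *m y^T)^T 0 0 by rewrite [RHS]mxE.
by rewrite !trmx_mul trmxK sY mulmxA.
Qed.

Lemma rform_conj m n (N : 'M[R]_(m, n)) (Y : 'M[R]_n) x y :
  rform (N *m Y *m N^T) x y = rform Y (x *m N) (y *m N).
Proof. by rewrite /rform trmx_mul !mulmxA. Qed.

Lemma rform_gram m n (B : 'M[R]_(n, m)) x : 0 <= rform (B *m B^T) x x.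
Proof.
rewrite /rform mulmxA -mulmxA -trmx_mul mxE; apply: sumr_ge0 => i _.
by rewrite !mxE -expr2 sqr_ge0.
Qed.

Lemma rform_delta n (Y : 'M[R]_n) i j : Y i j = rform Y 'e_i 'e_j.
Proof. by rewrite /rform -rowE trmx_delta -colE !mxE. Qed.

Lemma rformE n (Y : 'M[R]_n) x y : rform Y x y = \sum_b \sum_a x 0 a * Y a b * y 0 b.
Proof.
rewrite /rform mxE; apply: eq_bigr => b _; rewrite mxE big_distrl /=.
by apply: eq_bigr => a _; rewrite !mxE.
Qed.

Lemma rform_decay n (M Y : 'M[R]_n) (x y : 'rV_n) (eps : R) :
  schur_stable M -> 0 < eps -> exists k, `|rform Y (x *m M ^+ k) (y *m M ^+ k)| < eps.
Proof.
move=> /schur_stable_geo_bounded[r /andP[r0 r1] Hr] e0.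
have [cx Hcx] := choice (Hr x); have [cy Hcy] := choice (Hr y).
apply: (geo_bounded_small (r := r ^+ 2)) => //.
  by rewrite exprn_ge0 // exprn_ilt1.
exists (\sum_b \sum_a cx a * `|Y a b| * cy b) => k.
rewrite rformE -exprM mulnC exprM mulr_suml.
apply: (le_trans (ler_norm_sum _ _ _)); apply: ler_sum => b _; rewrite mulr_suml.
apply: (le_trans (ler_norm_sum _ _ _)); apply: ler_sum => a _.
rewrite (_ : _ * _ * (r ^+ k) ^+ 2 = (cx a * r ^+ k) * `|Y a b| * (cy b * r ^+ k)).
  by rewrite !normrM ler_pM ?mulr_ge0 // ler_wpM2r.
by rewrite expr2; ring.
Qed.

End RowForm.

Section Lyapunov.
Variable R : realType.

Lemma lyap_hom_eq0 n (M Y : 'M[R]_n) : schur_stable M -> Y = M *m Y *m M^T -> Y = 0.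
Proof.
move=> HM HY.
have iter k x y : rform Y x y = rform Y (x *m M ^+ k) (y *m M ^+ k).
  elim: k x y => [|k IH] x y; first by rewrite expr0 !mulmx1.
  by rewrite IH {1}HY rform_conj exprSr -!mulmxE !mulmxA.
apply/matrixP => i j; rewrite mxE rform_delta; apply/eqP; apply: contraT => nz.
rewrite -normr_gt0 in nz; have [k] := rform_decay Y 'e_i 'e_j HM nz.
by rewrite -iter ltxx.
Qed.

Lemma lyap_symmetric n m (M S : 'M[R]_n) (B : 'M[R]_(n, m)) : schur_stable M ->
  S = M *m S *m M^T + B *m B^T -> S^T = S.
Proof.
move=> HM HS; apply/eqP; rewrite -subr_eq0; apply/eqP/(lyap_hom_eq0 HM).
have HST : S^T = M *m S^T *m M^T + B *m B^T.
  by rewrite {1}HS linearD /= !trmx_mul !trmxK mulmxA.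
rewrite [in LHS]HST [X in _ - X = _]HS mulmxBr mulmxBl.
by rewrite opprD addrACA subrr addr0.
Qed.

Lemma lyap_psd n m (M S : 'M[R]_n) (B : 'M[R]_(n, m)) : schur_stable M ->
  S = M *m S *m M^T + B *m B^T -> psd S.
Proof.
move=> HM HS; split; first exact: lyap_symmetric HS.
move=> v; rewrite rform_tr; set x := v^T.
have mono k : rform S (x *m M ^+ k) (x *m M ^+ k) <= rform S x x.
  elim: k => [|k IH]; first by rewrite expr0 mulmx1.
  apply: le_trans IH; rewrite [in X in _ <= X]HS rformD rform_conj.
  by rewrite exprSr -mulmxE !mulmxA lerDl rform_gram.
rewrite leNgt; apply/negP => neg.
rewrite -oppr_gt0 in neg; have [k] := rform_decay S x x HM neg.
have := mono k; have := ler_norm (- rform S (x *m M ^+ k) (x *m M ^+ k)).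
rewrite normrN; lra.
Qed.

End Lyapunov.

Section Loewner.
Variable R : realType.

Lemma loewner_le_qf n (X Y : 'M[R]_n) v : loewner_le X Y -> qf X v <= qf Y v.
Proof.
move=> [_ /(_ v)].
by rewrite mulmxBr mulmxBl [X in 0 <= X]mxE [X in _ + X]mxE subr_ge0.
Qed.

Lemma psdD n (X Y : 'M[R]_n) : psd X -> psd Y -> psd (X + Y).
Proof.
move=> [sX pX] [sY pY]; split; first by rewrite /symmetric linearD /= sX sY.
by move=> v; rewrite mulmxDr mulmxDl mxE addr_ge0.
Qed.

Lemma psdZ n a (X : 'M[R]_n) : 0 <= a -> psd X -> psd (a *: X).
Proof.
move=> a0 [sX pX]; split; first by rewrite /symmetric linearZ /= sX.
by move=> v; rewrite -scalemxAr -scalemxAl mxE mulr_ge0.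
Qed.

Lemma psd_congr m n (D : 'M[R]_(m, n)) X : psd X -> psd (D^T *m X *m D).
Proof.
move=> [sX pX]; split; first by rewrite /symmetric !trmx_mul trmxK sX mulmxA.
by move=> v; have := pX (D *m v); rewrite trmx_mul !mulmxA.
Qed.

Lemma psd_gram m n (B : 'M[R]_(n, m)) : psd (B *m B^T).
Proof.
split; first by rewrite /symmetric trmx_mul trmxK.
by move=> v; rewrite rform_tr rform_gram.
Qed.

Lemma loewner_le_congr m n (D : 'M[R]_(m, n)) X Y :
  loewner_le X Y -> loewner_le (D^T *m X *m D) (D^T *m Y *m D).
Proof. by rewrite /loewner_le -mulmxBl -mulmxBr; exact: psd_congr. Qed.

Lemma psd_Sigma_r nx ny nw (C : 'M[R]_(ny, nx)) (Dw : 'M[R]_(ny, nw)) S :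
  psd S -> psd (Sigma_r C Dw S).
Proof. by move=> /(psd_congr C^T); rewrite trmxK => /psdD; apply; apply: psd_gram. Qed.

Lemma rform_invmx n (P : 'M[R]_n) x y : P^T = P -> P \in unitmx ->
  rform P x (y *m invmx P) = (x *m y^T) 0 0.
Proof. by move=> sP uP; rewrite /rform trmx_mul trmx_inv sP mulmxA mulmxK. Qed.

Lemma loewner_le_invmx n (P Q : 'M[R]_n) : psd P -> loewner_le P Q ->
  P \in unitmx -> Q \in unitmx -> loewner_le (invmx Q) (invmx P).
Proof.
(* For [y = v^T Q^-1] and [z = v^T P^-1]:
   [0 <= (y - z) P (y - z)^T] and [y P y^T <= y Q y^T = v^T Q^-1 v]. *)
move=> [sP pP] [sQP pQP] uP uQ.
have sQ : Q^T = Q by apply: (addIr (- P)); rewrite -sP -linearB /= sP.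
have sPi : (invmx P)^T = invmx P by rewrite trmx_inv sP.
have sQi : (invmx Q)^T = invmx Q by rewrite trmx_inv sQ.
split=> [|v]; first by rewrite /symmetric linearB /= sPi sQi.
set x := v^T; set y := x *m invmx Q; set z := x *m invmx P.
have := pP (y - z)^T; have := pQP y^T; rewrite !rform_tr !trmxK.
rewrite rformB rformBl !rformBr (rform_sym z y sP).
have e1 : rform P y z = rform (invmx Q) x x by rewrite rform_invmx.
have e2 : rform P z z = rform (invmx P) x x by rewrite rform_invmx.
have e3 : rform Q y y = rform (invmx Q) x x by rewrite rform_invmx.
rewrite e1 e2 e3 rformB; lra.
Qed.

Lemma lam_feasible_loewner ny na (D : 'M[R]_(ny, na)) (W P Q : 'M[R]_ny) lam :
  loewner_le (D^T *m invmx Q *m D) (D^T *m invmx P *m D) ->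
  lam_feasible D W Q lam -> lam_feasible D W P lam.
Proof.
move=> le_QP [lam0 feas]; split => //.
set X := D^T *m invmx Q *m D; set Y := D^T *m invmx P *m D.
have -> : 2^-1 *: Y - lam *: (D^T *m W *m D) =
          (2^-1 *: X - lam *: (D^T *m W *m D)) + 2^-1 *: (Y - X).
  by rewrite scalerBr [RHS]addrC addrA subrK.
by apply: psdD feas (psdZ _ le_QP); rewrite invr_ge0 ler0n.
Qed.

Lemma J0_le_loewner ny na (D : 'M[R]_(ny, na)) (W P Q : 'M[R]_ny) :
  loewner_le (D^T *m invmx Q *m D) (D^T *m invmx P *m D) ->
  (J0 D W Q <= J0 D W P)%E.
Proof.
move=> le_QP; apply/ereal_infP => _ [a Ha <-].
apply: (le_trans (ereal_inf_lbound _)); first by exists a.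
by rewrite lee_fin ler_wpM2l ?invr_ge0 ?ler0n // loewner_le_qf.
Qed.

End Loewner.

Unset Implicit Arguments.

Theorem proposition1 (R : realType) (nx ny nw na : nat)
  (A : 'M[R]_nx) (Bw : 'M[R]_(nx, nw)) (C : 'M[R]_(ny, nx)) (Dw : 'M[R]_(ny, nw))
  (* (A, C) detectable, (A, Bw) stabilizable *)
  (Hdet : exists L : 'M[R]_(nx, ny), schur_stable (A - L *m C))
  (Hstab : exists K : 'M[R]_(nw, nx), schur_stable (A - Bw *m K))
  (* residual covariance invertible for every stabilizing gain *)
  (Hinv : forall (L : 'M[R]_(nx, ny)) (S : 'M[R]_nx),
      schur_stable (A - L *m C) -> lyap_sol A Bw C Dw L S ->
      Sigma_r C Dw S \in unitmx)
  (* the steady-state Kalman gain Lkal, with Sigma_x~(Lkal) = Skal *)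
  (Lkal : 'M[R]_(nx, ny)) (Skal : 'M[R]_nx)
  (Hkal_stable : schur_stable (A - Lkal *m C))
  (Hkal_sol : lyap_sol A Bw C Dw Lkal Skal)
  (Hkal_min : forall (L : 'M[R]_(nx, ny)) (S : 'M[R]_nx),
      schur_stable (A - L *m C) -> lyap_sol A Bw C Dw L S ->
      loewner_le (Sigma_r C Dw Skal) (Sigma_r C Dw S))
  (* attack selection matrix and weight *)
  (j : 'I_na -> 'I_ny) (Hj : strictly_increasing j)
  (W : 'M[R]_ny) (HW : psd W) :
  forall (L : 'M[R]_(nx, ny)) (S : 'M[R]_nx),
    schur_stable (A - L *m C) -> lyap_sol A Bw C Dw L S ->
    (* Lkal is optimal for the max problem: every lambda feasible for L is feasible for Lkal *)
    (forall lam : R, lam_feasible (sel_mx j) W (Sigma_r C Dw S) lam ->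
                     lam_feasible (sel_mx j) W (Sigma_r C Dw Skal) lam)
    /\
    (* J0(Lkal) >= J0(L) *)
    (J0 (sel_mx j) W (Sigma_r C Dw S) <= J0 (sel_mx j) W (Sigma_r C Dw Skal))%E.
Proof.
(* Detectability and stabilizability only matter for the existence of [Lkal],
   which is given; the argument works for any [D_a] and [W]. *)
move=> L S HL HS.
have psd_kal := psd_Sigma_r C Dw (lyap_psd Hkal_stable Hkal_sol).
have le_inv := loewner_le_invmx psd_kal (Hkal_min L S HL HS)
  (Hinv _ _ Hkal_stable Hkal_sol) (Hinv L S HL HS).
have le_sel := loewner_le_congr (sel_mx j) le_inv.
by split=> [lam|]; [exact: lam_feasible_loewner | exact: J0_le_loewner].
Qed.
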